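(* For any generalized causal team $T$ over a signature $\sigma$: $T\models^g\Xi^{\{(s,\mathcal F),(t,\mathcal G)\}}$ for all $(s,\mathcal F),(t,\mathcal G)\in\mathbb S_\sigma$ with $\mathcal F\not\sim\mathcal G$, if and only if $T$ is uniform.
   Context: A signature $\sigma=(\mathrm{Dom},\mathrm{Ran})$: $\mathrm{Dom}$ nonempty finite set of variables, each with nonempty finite range $\mathrm{Ran}(X)$; $\mathbf X=\mathbf x$ abbreviates $X_1=x_1\wedge\dots\wedge X_n=x_n$ ($\mathbf x\in\prod\mathrm{Ran}(X_i)$), inconsistent if it contains $X=x,X=x'$ with $x\ne x'$. ${=}(V)$ is the constancy atom; $\bot$ abbreviates $X=x\wedge\neg(X=x)$; $\alpha\supset\beta$ abbreviates $\neg\alpha\vee\beta$; empty $\vee$-disjunction is $\bot$. Systems of functions $\mathcal F$: for each $V\in\mathrm{En}(\mathcal F)\subseteq\mathrm{Dom}$ parents $PA^{\mathcal F}_V\subseteq\mathrm{Dom}\setminus\{V\}$ and $\mathcal F_V:\mathrm{Ran}(PA^{\mathcal F}_V)\to\mathrm{Ran}(V)$; $\mathrm{Ex}(\mathcal F)=\mathrm{Dom}\setminus\mathrm{En}(\mathcal F)$; only recursive (acyclic parent graph), forming $\mathbb F_\sigma$. Assignments form $\mathbb A_\sigma$; $s$ compatible with $\mathcal F$ if $s(V)=\mathcal F_V(s(PA^{\mathcal F}_V))$ for $V\in\mathrm{En}(\mathcal F)$; $\mathbb S_\sigma$ = set of compatible pairs. A generalized causal team is a subset $T\subseteq\mathbb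 S_\sigma$; $T^-=\{s:(s,\mathcal F)\in T\}$. For consistent $\mathbf X=\mathbf x$: $\mathcal F_{\mathbf X=\mathbf x}$ restricts $\mathcal F$ to $\mathrm{En}(\mathcal F)\setminus\mathbf X$; $s^{\mathcal F}_{\mathbf X=\mathbf x}$: $X_i\mapsto x_i$, $V\mapsto s(V)$ on $\mathrm{Ex}(\mathcal F)\setminus\mathbf X$, $V\mapsto\mathcal F_V(s^{\mathcal F}_{\mathbf X=\mathbf x}(PA^{\mathcal F}_V))$ on $\mathrm{En}(\mathcal F)\setminus\mathbf X$; $T_{\mathbf X=\mathbf x}=\{(s^{\mathcal F}_{\mathbf X=\mathbf x},\mathcal F_{\mathbf X=\mathbf x}):(s,\mathcal F)\in T\}$. $\models^g$: $T\models X=x$ iff $s(X)=x$ for all $s\in T^-$; $T\models{=}(V)$ iff $s(V)=s'(V)$ for all $s,s'\in T^-$; $T\models\neg\alpha$ iff $\{(s,\mathcal F)\}\not\models\alpha$ for all $(s,\mathcal F)\in T$; $\wedge$ classical; $T\models\varphi\vee\psi$ iff $T=T_1\cup T_2$ with $T_1\models\varphi$, $T_2\models\psi$; $T\models\mathbf X=\mathbf x\;\Box\!\!\rightarrow\varphi$ iff $\mathbf X=\mathbf x$ inconsistent or $T_{\mathbf X=\mathbf x}\models\varphi$. $\mathrm{Cn}(\mathcal F)=\{V\in\mathrm{En}(\mathcal F):\mathcal F_V\text{ constant}\}$; $\mathcal F_V\sim\mathcal G_V$ iff $\mathcal F_V(\mathbf x\mathbf y)=\mathcal G_V(\mathbf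 x\mathbf z)$ for all $\mathbf x\in\mathrm{Ran}(PA^{\mathcal F}_V\cap PA^{\mathcal G}_V)$, $\mathbf y\in\mathrm{Ran}(PA^{\mathcal F}_V\setminus PA^{\mathcal G}_V)$, $\mathbf z\in\mathrm{Ran}(PA^{\mathcal G}_V\setminus PA^{\mathcal F}_V)$; $\mathcal F\sim\mathcal G$ iff $\mathrm{En}(\mathcal F)\setminus\mathrm{Cn}(\mathcal F)=\mathrm{En}(\mathcal G)\setminus\mathrm{Cn}(\mathcal G)$ and $\mathcal F_V\sim\mathcal G_V$ for each such $V$. $T$ is uniform if $\mathcal F\sim\mathcal G$ for all $(s,\mathcal F),(t,\mathcal G)\in T$. $T^{\mathcal F}=\{(s,\mathcal G)\in T:\mathcal G\sim\mathcal F\}$; $S\approx T$ iff $(S^{\mathcal F})^-=(T^{\mathcal F})^-$ for all $\mathcal F$; on pairs $(s,\mathcal F)\approx(t,\mathcal G)$ iff $s=t$ and $\mathcal F\sim\mathcal G$; $T/_{\approx}$ = set of $\approx$-classes of elements of $T$. $S\preccurlyeq T$ iff $S\approx R$ for some $R\subseteq T$ ($\emptyset\preccurlyeq T$ always). Formulas: $\Theta^{A}:=\bigvee_{s\in A}\bigwedge_{V\in\mathrm{Dom}}V=s(V)$. With $\mathbf W_V$ listing $\mathrm{Dom}\setminus\{V\}$: $\Phi^{\mathcal F}:=\bigwedge_{V\in\mathrm{En}(\mathcal F)\setminus\mathrm{Cn}(\mathcal F)}\eta(V)\wedge\bigwedge_{V\notin\mathrm{En}(\mathcal F)\setminus\mathrm{Cn}(\mathcal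 F)}\xi(V)$, $\eta(V)$ the conjunction of all $(\mathbf W=\mathbf w\wedge PA^{\mathcal F}_V=\mathbf p)\;\Box\!\!\rightarrow V=\mathcal F_V(\mathbf p)$ ($\mathbf W$ listing $\mathrm{Dom}\setminus(PA^{\mathcal F}_V\cup\{V\})$, $\mathbf w\in\mathrm{Ran}(\mathbf W)$, $\mathbf p\in\mathrm{Ran}(PA^{\mathcal F}_V)$), $\xi(V)$ the conjunction of all $V=v\supset(\mathbf W_V=\mathbf w\;\Box\!\!\rightarrow V=v)$. $\chi:=\bigwedge_V\bigwedge_{\mathbf w\in\mathrm{Ran}(\mathbf W_V)}(\mathbf W_V=\mathbf w\;\Box\!\!\rightarrow{=}(V))\wedge\bigwedge_V{=}(V)$; $\chi_0:=\bot$, $\chi_k:=\chi\vee\dots\vee\chi$ ($k$ disjuncts). For a nonempty generalized causal team $T$ with $|T/_{\approx}|=k+1$: $\Xi^T:=\chi_k\vee\Theta^{\mathbb A_\sigma\setminus T^-}\vee\bigvee\{\Theta^{\{s\}}\wedge\Phi^{\mathcal F}:s\in T^-,\ \mathcal F\in\mathbb F_\sigma,\ \{(s,\mathcal F)\}\not\preccurlyeq T\}$. *)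

From mathcomp Require Import all_boot.
From Stdlib Require Import Relations.

Set Implicit Arguments.
Unset Strict Implicit.
Unset Printing Implicit Defensive.

(* A signature: a nonempty finite set of variables Dom, each with a finite
   range Ran V (nonemptiness is a hypothesis of the theorem). *)
Record signature := Signature { Dom : finType; Ran : Dom -> finType }.
Arguments Ran : clear implicits.

Definition assign (sg : signature) := forall V : Dom sg, Ran sg V.

(* For V endogenous, fn V = Some f where
   f : assign -> Ran V only depends on the coordinates in pa V (this is the
   same data as a map Ran(PA_V) -> Ran(V)); for V exogenous fn V = None and
   pa V is (canonically) empty, so there is no junk data. *)
Record sysf (sg : signature) := Sysf {
  pa : Dom sg -> {set Dom sg};
  fn : forall V : Dom sg, option (assign sg -> Ran sg V) }.

Definition parent_rel (sg : signature) (F : sysf sg) (W V : Dom sg) : Prop :=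
  W \in pa F V.

Definition is_system (sg : signature) (F : sysf sg) : Prop :=
  (forall V, fn F V = None -> pa F V = set0) /\
  (forall V, V \notin pa F V) /\
  (forall V f, fn F V = Some f ->
     forall s s' : assign sg, (forall W, W \in pa F V -> s W = s' W) -> f s = f s') /\
  (forall V, ~ clos_trans _ (parent_rel F) V V).

Definition compatible (sg : signature) (s : assign sg) (F : sysf sg) : Prop :=
  forall V f, fn F V = Some f -> s V = f s.

Definition pair (sg : signature) := (assign sg * sysf sg)%type.
Definition team (sg : signature) := pair sg -> Prop.

Definition in_S (sg : signature) (p : pair sg) : Prop :=
  is_system p.2 /\ compatible p.1 p.2.

Definition gct (sg : signature) (T : team sg) : Prop := forall p, T p -> in_S p.

Definition team_asg (sg : signature) (T : team sg) (s : assign sg) : Prop :=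
  exists F, T (s, F).

Definition singleton (sg : signature) (p : pair sg) : team sg := fun q => q = p.
Definition pairteam (sg : signature) (p q : pair sg) : team sg :=
  fun r => r = p \/ r = q.

Definition intv (sg : signature) := seq {V : Dom sg & Ran sg V}.

Definition consistent (sg : signature) (Xx : intv sg) : Prop :=
  forall e1 e2, e1 \in Xx -> e2 \in Xx -> tag e1 = tag e2 -> e1 = e2.

Definition in_dom (sg : signature) (V : Dom sg) (Xx : intv sg) : bool :=
  V \in [seq tag e | e <- Xx].

Definition sys_do (sg : signature) (F : sysf sg) (Xx : intv sg) : sysf sg :=
  Sysf (fun V => if in_dom V Xx then set0 else pa F V)
       (fun V => if in_dom V Xx then None else fn F V).

(* t = s^F_{X=x}: the (for recursive F unique) assignment satisfying the
   defining equations *)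
Definition asg_do (sg : signature) (F : sysf sg) (Xx : intv sg) (s t : assign sg) : Prop :=
  (forall e, e \in Xx -> t (tag e) = tagged e) /\
  (forall V, ~~ in_dom V Xx ->
     match fn F V with
     | None => t V = s V
     | Some f => t V = f t
     end).

Definition team_do (sg : signature) (T : team sg) (Xx : intv sg) : team sg :=
  fun p => exists s F, T (s, F) /\ p.2 = sys_do F Xx /\ asg_do F Xx s p.1.

(* Formulas, shallowly: a formula is its class of (generalized causal) teams;
   "phi T" reads "T |=^g phi". *)
Definition form (sg : signature) := team sg -> Prop.

Definition f_eq (sg : signature) (X : Dom sg) (x : Ran sg X) : form sg :=
  fun T => forall p, T p -> p.1 X = x.
Arguments f_eq {sg} X x _.
Definition f_dep (sg : signature) (V : Dom sg) : form sg :=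
  fun T => forall p q, T p -> T q -> p.1 V = q.1 V.
Definition f_neg (sg : signature) (a : form sg) : form sg :=
  fun T => forall p, T p -> ~ a (singleton p).
Definition f_and (sg : signature) (phi psi : form sg) : form sg :=
  fun T => phi T /\ psi T.
Definition f_or (sg : signature) (phi psi : form sg) : form sg :=
  fun T => exists T1 T2 : team sg,
    (forall p, T p <-> T1 p \/ T2 p) /\ phi T1 /\ psi T2.
Definition f_cf (sg : signature) (Xx : intv sg) (phi : form sg) : form sg :=
  fun T => ~ consistent Xx \/ phi (team_do T Xx).
Definition f_impl (sg : signature) (a b : form sg) : form sg := f_or (f_neg a) b.

(* Finite conjunctions / disjunctions indexed by (finite) families; since
   wedge and vee are associative and commutative in team semantics, these
   coincide with iterated binary connectives (empty disjunction = bottom). *)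
Definition f_bigand (sg : signature) (I : Type) (P : I -> Prop) (phi : I -> form sg)
  : form sg := fun T => forall i, P i -> phi i T.
Definition f_bigor (sg : signature) (I : Type) (P : I -> Prop) (phi : I -> form sg)
  : form sg := fun T => exists Ti : I -> team sg,
    (forall p, T p <-> exists i, P i /\ Ti i p) /\ (forall i, P i -> phi i (Ti i)).

(* bottom = empty disjunction (true exactly of the empty team, like X=x /\ ~X=x) *)
Definition f_bot (sg : signature) : form sg :=
  f_bigor (fun _ : unit => False) (fun _ => fun _ => True).

Definition Theta (sg : signature) (A : assign sg -> Prop) : form sg :=
  f_bigor A (fun s => f_bigand (fun _ : Dom sg => True) (fun V => f_eq V (s V))).

Definition allbut (sg : signature) (V : Dom sg) (u : assign sg) : intv sg :=
  [seq Tagged (fun W => Ran sg W) (u W) | W <- enum (Dom sg) & W != V].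

(* eta(V): conjunction of (W = w /\ PA_V = p) [] -> V = F_V(p); the
   antecedent assigns every variable other than V, so letting u range over
   all assignments (values at V irrelevant) covers all w, p exactly. *)
Definition eta (sg : signature) (F : sysf sg) (V : Dom sg) : form sg :=
  fun T => forall f, fn F V = Some f ->
    f_bigand (fun _ : assign sg => True)
             (fun u => f_cf (allbut V u) (f_eq V (f u))) T.

Definition xi (sg : signature) (V : Dom sg) : form sg :=
  f_bigand (fun _ : Ran sg V => True) (fun v =>
    f_bigand (fun _ : assign sg => True) (fun u =>
      f_impl (f_eq V v) (f_cf (allbut V u) (f_eq V v)))).

Definition is_const (sg : signature) (F : sysf sg) (V : Dom sg) : Prop :=
  exists f, fn F V = Some f /\ forall s s' : assign sg, f s = f s'.
Definition nce (sg : signature) (F : sysf sg) (V : Dom sg) : Prop :=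
  fn F V <> None /\ ~ is_const F V.

Definition Phi (sg : signature) (F : sysf sg) : form sg :=
  f_and (f_bigand (fun V => nce F V) (fun V => eta F V))
        (f_bigand (fun V => ~ nce F V) (fun V => xi V)).

(* F_V ~ G_V, written out for functions given on full assignments *)
Definition fn_sim (sg : signature) (F G : sysf sg) (V : Dom sg) : Prop :=
  forall f g, fn F V = Some f -> fn G V = Some g ->
    forall u u' : assign sg,
      (forall W, W \in pa F V :&: pa G V -> u W = u' W) -> f u = g u'.

Definition sys_sim (sg : signature) (F G : sysf sg) : Prop :=
  (forall V, nce F V <-> nce G V) /\ (forall V, nce F V -> fn_sim F G V).

Definition uniform (sg : signature) (T : team sg) : Prop :=
  forall p q, T p -> T q -> sys_sim p.2 q.2.

Definition team_at (sg : signature) (T : team sg) (F : sysf sg) : team sg :=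
  fun p => T p /\ sys_sim p.2 F.

Definition team_approx (sg : signature) (S T : team sg) : Prop :=
  forall F, is_system F ->
    forall s, team_asg (team_at S F) s <-> team_asg (team_at T F) s.

Definition preceq (sg : signature) (S T : team sg) : Prop :=
  exists R : team sg, (forall p, R p -> T p) /\ team_approx S R.

Definition pair_approx (sg : signature) (p q : pair sg) : Prop :=
  p.1 = q.1 /\ sys_sim p.2 q.2.

Definition quot_card (sg : signature) (T : team sg) (n : nat) : Prop :=
  exists r : 'I_n -> pair sg,
    (forall i, T (r i)) /\
    (forall i j, pair_approx (r i) (r j) -> i = j) /\
    (forall p, T p -> exists i, pair_approx p (r i)).

Definition chi (sg : signature) : form sg :=
  f_and (f_bigand (fun _ : Dom sg => True) (fun V =>
           f_bigand (fun _ : assign sg => True) (fun u =>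
             f_cf (allbut V u) (f_dep V))))
        (f_bigand (fun _ : Dom sg => True) (fun V => f_dep V)).

Fixpoint chik (sg : signature) (k : nat) : form sg :=
  match k with
  | 0 => @f_bot sg
  | 1 => @chi sg
  | k'.+1 => f_or (@chi sg) (@chik sg k')
  end.

Definition Xi (sg : signature) (T : team sg) : form sg :=
  fun U => exists k, quot_card T k.+1 /\
    f_or (@chik sg k)
      (f_or (Theta (fun s => ~ team_asg T s))
            (f_bigor (fun p : pair sg =>
                        team_asg T p.1 /\ is_system p.2 /\ ~ preceq (singleton p) T)
                     (fun p => f_and (Theta (fun s => s = p.1)) (Phi p.2)))) U.

From mathcomp Require Import all_boot.
From Stdlib Require Import Classical FunctionalExtensionality.

(* Everything is read off the counterfactual values [cfval H V u a]: the value
   of V once all other variables are set as in u.  Systems whose counterfactual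
   values agree are similar (non-constant endogenous variables compute the same
   function, all others stay constant), and similar systems agree at a common
   compatible assignment.  chi says that all pairs of a team share their
   counterfactual values, and Phi^F that they are those of F.
   For dissimilar p, q the quotient {p, q}/approx has two classes, so Xi^{p,q}
   is chi \/ Xi_tail, and no pair approx p or q satisfies Xi_tail: Theta
   excludes its assignment, and Phi^G would make it <= {p, q}.  Hence if
   T |= Xi^{p,q} with p, q in T, both sit in the chi part and are similar after
   all.  Conversely, in a uniform team the pairs approx p or q share one
   assignment, so they satisfy chi, and each remaining pair is covered by Theta
   or by its own singleton disjunct Theta^{s} /\ Phi^G. *)

Set Implicit Arguments.
Unset Strict Implicit.
Unset Printing Implicit Defensive.

Section CausalTeams.

Variable sg : signature.

Implicit Types (a b u : assign sg) (F G H K : sysf sg) (V W : Dom sg)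
  (p q e r : pair sg) (P T U : team sg).

(* The value of [V] in [a^H_{W_V = w}] with [w] the restriction of [u] to
   [W_V = Dom \ {V}]; see [asg_do_allbut_val]. *)
Definition cfval H V u a : Ran sg V := if fn H V is Some f then f u else a V.

Lemma in_dom_allbut V W u : in_dom W (allbut V u) = (W != V).
Proof.
rewrite /in_dom /allbut -map_comp (eq_map (g := id)) // map_id.
by rewrite mem_filter mem_enum andbT.
Qed.

Lemma mem_allbut V W u : W != V -> Tagged (Ran sg) (u W) \in allbut V u.
Proof.
move=> WV; apply: (map_f (fun W => Tagged (Ran sg) (u W))).
by rewrite mem_filter mem_enum andbT.
Qed.

Lemma consistent_allbut V u : consistent (allbut V u).
Proof. by move=> e1 e2 /mapP [W1 _ ->] /mapP [W2 _ ->] /= ->. Qed.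

Lemma system_fn_eq H V f s s' : is_system H -> fn H V = Some f ->
  (forall W, W != V -> s W = s' W) -> f s = f s'.
Proof.
move=> [_ [noloop [local _]]] HV ss'; apply: (local V f HV) => W WV.
by apply: ss'; apply: contraTneq WV => ->; apply: noloop.
Qed.

Lemma asg_do_allbut_val H V u a t :
  is_system H -> asg_do H (allbut V u) a t -> t V = cfval H V u a.
Proof.
move=> Hs [tX tE]; have := tE V; rewrite in_dom_allbut eqxx /cfval => /(_ isT).
case HV: (fn H V) => [f|//] ->; apply: (system_fn_eq Hs HV) => W WV.
exact: tX _ (mem_allbut u WV).
Qed.

Lemma asg_do_allbut_exists H V u a :
  is_system H -> exists t, asg_do H (allbut V u) a t.
Proof.
move=> Hs; exists (dfwith u (cfval H V u a)); split.
  move=> e /mapP [W]; rewrite mem_filter => /andP [WV _] -> /=.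
  by rewrite dfwith_out // eq_sym.
move=> W; rewrite in_dom_allbut negbK => /eqP ->; rewrite dfwith_in /cfval.
case HV: (fn H V) => [f|//]; apply: (system_fn_eq Hs HV) => W' W'V.
by rewrite dfwith_out // eq_sym.
Qed.

Lemma cfval_self H V u : compatible u H -> cfval H V u u = u V.
Proof. by rewrite /cfval; case HV: (fn H V) => [f|//] /(_ V f HV) ->. Qed.

Lemma nce_cfvalP H V a :
  nce H V <-> ~ (forall u u', cfval H V u a = cfval H V u' a).
Proof.
rewrite /cfval; split.
  move=> [HV nc] cst; apply: nc; rewrite /is_const.
  by case: (fn H V) HV cst => [f _ cst|[]//]; exists f.
case HV: (fn H V) => [f|] ncst; last by case: ncst.
split=> [|[g [Hg cst]]]; first by rewrite HV.
by rewrite HV in Hg; case: Hg cst => <-; apply: ncst.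
Qed.

Lemma nce_eq_cfval H K V a b : (forall u, cfval H V u a = cfval K V u b) ->
  nce H V <-> nce K V.
Proof.
move=> HK; rewrite (nce_cfvalP H V a) (nce_cfvalP K V b).
split=> ncst cst; apply: ncst => u u'; first by rewrite !HK.
by rewrite -!HK.
Qed.

Lemma cfval_not_nce H V u a : in_S (a, H) -> ~ nce H V -> cfval H V u a = a V.
Proof.
move=> [_ compat] /(nce_cfvalP H V a) /NNPP cst.
by rewrite (cst u a) cfval_self.
Qed.

Lemma fn_sim_of_ext H K V h k : is_system H -> is_system K ->
  fn H V = Some h -> fn K V = Some k -> h =1 k -> fn_sim H K V.
Proof.
move=> [_ [_ [Hloc _]]] [_ [_ [Kloc _]]] HV KV hk f g.
rewrite HV KV => -[<-] [<-] u u' uu'.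
pose w W := if W \in pa H V then u W else u' W.
have -> : h u = h w by apply: (Hloc V h HV) => W WH; rewrite /w WH.
rewrite hk; apply: (Kloc V k KV) => W WK; rewrite /w.
by case: ifP => // WH; apply: uu'; rewrite inE WH.
Qed.

Lemma fn_sim_of_cfval H K V a b : is_system H -> is_system K -> nce H V ->
  (forall u, cfval H V u a = cfval K V u b) -> fn_sim H K V.
Proof.
move=> Hs Ks ncH HK; have [ncK _] := proj1 (nce_eq_cfval HK) ncH.
move: ncH HK => [ncH _]; rewrite /cfval.
case HV: (fn H V) ncH => [h|//] _; case KV: (fn K V) ncK => [k|//] _ hk.
exact: fn_sim_of_ext Hs Ks HV KV hk.
Qed.

Lemma sys_sim_refl F : is_system F -> sys_sim F F.
Proof.
move=> Fs; split=> // V _.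
case FV: (fn F V) => [f|]; first by apply: (fn_sim_of_ext Fs Fs FV FV).
by move=> f; rewrite FV.
Qed.

Lemma sys_sim_sym F G : sys_sim F G -> sys_sim G F.
Proof.
move=> [ncFG simFG]; split=> V; first by rewrite ncFG.
move=> /ncFG /simFG sim g f GV FV u u' uu'; symmetry.
by apply: sim FV GV _ _ _ => W; rewrite setIC => /uu'.
Qed.

Lemma sys_sim_trans F G H : sys_sim F G -> sys_sim G H -> sys_sim F H.
Proof.
move=> [ncFG simFG] [ncGH simGH]; split=> V; first by rewrite ncFG.
move=> ncF f h FV HV u u' uu'; have ncG := proj1 (ncFG V) ncF.
case GV: (fn G V) => [g|]; last by case: ncG; rewrite GV.
pose w W := if W \in pa F V then u W else u' W.
have -> : f u = g w.
  by apply: (simFG V ncF f g FV GV) => W; rewrite inE /w => /andP [-> _].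
apply: (simGH V ncG g h GV HV) => W; rewrite inE /w => /andP [WG WH].
by case: ifP => // WF; apply: uu'; rewrite inE WF.
Qed.

Lemma sys_sim_of_cfval H K a b : is_system H -> is_system K ->
  (forall V u, cfval H V u a = cfval K V u b) -> sys_sim H K.
Proof.
move=> Hs Ks HK; split=> V; first exact: nce_eq_cfval.
by move=> ncH; apply: fn_sim_of_cfval.
Qed.

Lemma cfval_sim H K V u a : in_S (a, H) -> in_S (a, K) -> sys_sim H K ->
  cfval H V u a = cfval K V u a.
Proof.
move=> HS KS [ncHK simHK]; have [ncH | ncH] := classic (nce H V).
  move: (simHK V ncH) (ncH) (proj1 (ncHK V) ncH) => sim [+ _] [+ _].
  rewrite /cfval; case HV: (fn H V) => [h|//] _; case KV: (fn K V) => [k|//] _.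
  exact: sim.
by rewrite !cfval_not_nce // -ncHK.
Qed.

Lemma f_or_split (Q : pair sg -> Prop) (phi psi : form sg) U :
  phi (fun e => U e /\ Q e) -> psi (fun e => U e /\ ~ Q e) -> f_or phi psi U.
Proof.
move=> Hphi Hpsi; exists (fun e => U e /\ Q e), (fun e => U e /\ ~ Q e).
split=> // e; split=> [Ue | [[]|[]] //].
by have [Qe|nQe] := classic (Q e); [left|right].
Qed.

Lemma ThetaP (A : assign sg -> Prop) U : Theta A U <-> forall p, U p -> A p.1.
Proof.
split=> [[Us [DU HUs]] p Up | HA].
  have [s [As Usp]] := proj1 (DU p) Up.
  suff -> : p.1 = s by [].
  by apply: functional_extensionality_dep => V; apply: (HUs s As V I p Usp).
exists (fun s p => U p /\ p.1 = s); split=> [p | s _ V _ p [_ ->] //].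
by split=> [Up | [s [_ []]] //]; exists p.1; split=> //; apply: HA.
Qed.

Lemma team_do_allbut_intro U V u a H : is_system H -> U (a, H) ->
  exists2 p', team_do U (allbut V u) p' & p'.1 V = cfval H V u a.
Proof.
move=> Hs UaH; have [t Ht] := asg_do_allbut_exists V u a Hs.
exists (t, sys_do H (allbut V u)); first by exists a, H.
exact: asg_do_allbut_val Hs Ht.
Qed.

Lemma team_do_allbut_elim U V u p' : gct U -> team_do U (allbut V u) p' ->
  exists a H, U (a, H) /\ p'.1 V = cfval H V u a.
Proof.
move=> gU [a [H [UaH [_ Ht]]]]; exists a, H; split=> //.
exact: asg_do_allbut_val (gU _ UaH).1 Ht.
Qed.

Lemma cf_allbut_eqP U V u x : gct U ->
  f_cf (allbut V u) (f_eq V x) U <-> forall a H, U (a, H) -> cfval H V u a = x.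
Proof.
move=> gU; split=> [[/(_ (@consistent_allbut V u)) [] | HU] a H UaH | Hx].
  by have [p' Dp' <-] := team_do_allbut_intro V u (gU _ UaH).1 UaH; apply: HU.
by right=> p' /(team_do_allbut_elim gU) [a [H [UaH ->]]]; apply: Hx.
Qed.

Lemma cf_allbut_depP U V u : gct U ->
  f_cf (allbut V u) (f_dep V) U <->
  forall a H b K, U (a, H) -> U (b, K) -> cfval H V u a = cfval K V u b.
Proof.
move=> gU; split=> [[/(_ (@consistent_allbut V u)) [] | HU] a H b K UaH UbK | Hx].
  have [p' Dp' <-] := team_do_allbut_intro V u (gU _ UaH).1 UaH.
  by have [q' Dq' <-] := team_do_allbut_intro V u (gU _ UbK).1 UbK; apply: HU.
right=> p' q' /(team_do_allbut_elim gU) [a [H [UaH ->]]].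
by move=> /(team_do_allbut_elim gU) [b [K [UbK ->]]]; apply: Hx.
Qed.

Lemma etaP U F V : gct U -> fn F V <> None ->
  eta F V U <-> forall a H, U (a, H) -> forall u, cfval H V u a = cfval F V u a.
Proof.
move=> gU; case FV: (fn F V) => [f|//] _.
have cfF u a : cfval F V u a = f u by rewrite /cfval FV.
split=> [etaU a H UaH u | HU f' FV' u _].
  by rewrite cfF; apply: (proj1 (cf_allbut_eqP u (f u) gU) (etaU f FV u I)).
move: FV'; rewrite FV => -[<-]; apply/cf_allbut_eqP => // a H UaH.
by rewrite HU.
Qed.

Lemma xiP U V : gct U ->
  xi V U <-> forall a H, U (a, H) -> forall u, cfval H V u a = a V.
Proof.
move=> gU; split=> [xiU a H UaH u | HU v _ u _].
  have [U1 [U2 [DU [negU1 cfU2]]]] := xiU (a V) I u I.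
  have gU2 : gct U2 by move=> e U2e; apply/gU/DU; right.
  case: (proj1 (DU _) UaH) => [/negU1 [] | U2aH]; first by move=> _ ->.
  exact: (proj1 (cf_allbut_eqP u (a V) gU2) cfU2 a H U2aH).
rewrite /f_impl; apply: (f_or_split (Q := fun e => e.1 V <> v)).
  by move=> e [_ eV] /(_ e erefl).
apply/cf_allbut_eqP; first by move=> e [/gU].
by move=> a H [UaH /NNPP <-]; apply: HU.
Qed.

Definition mimics F a H := forall V u,
  (nce F V -> cfval H V u a = cfval F V u a) /\
  (~ nce F V -> cfval H V u a = a V).

Lemma PhiP U F : gct U -> Phi F U <-> forall a H, U (a, H) -> mimics F a H.
Proof.
move=> gU; split=> [[etaU xiU] a H UaH V u | HU]; first split=> ncF.
- exact: (proj1 (etaP gU ncF.1) (etaU V ncF) a H UaH u).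
- exact: (proj1 (xiP V gU) (xiU V ncF) a H UaH u).
split=> V ncF.
  by apply/(etaP gU ncF.1) => a H UaH u; apply: (HU a H UaH V u).1.
by apply/(xiP V gU) => a H UaH u; apply: (HU a H UaH V u).2.
Qed.

Lemma mimics_refl a H : in_S (a, H) -> mimics H a H.
Proof. by move=> aH V u; split=> // ncH; apply: cfval_not_nce. Qed.

Lemma sys_sim_of_mimics F a H :
  is_system F -> is_system H -> mimics F a H -> sys_sim F H.
Proof.
move=> Fs Hs mFH.
have ncFH V : nce F V -> nce H V /\ fn_sim F H V.
  move=> ncF; have eqFH u : cfval F V u a = cfval H V u a.
    exact: esym ((mFH V u).1 ncF).
  by split; [apply/(nce_eq_cfval eqFH) | apply: fn_sim_of_cfval eqFH].
split=> V; last by move/ncFH => [].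
split=> [/ncFH [] // | ncH]; apply: NNPP => ncF.
by move/(nce_cfvalP H V a): ncH; apply=> u u'; rewrite !(proj2 (mFH V _) ncF).
Qed.

Lemma sys_sim_of_Phi U F a H :
  gct U -> is_system F -> U (a, H) -> Phi F U -> sys_sim F H.
Proof.
move=> gU Fs UaH /(PhiP F gU) /(_ a H UaH).
exact: sys_sim_of_mimics Fs (gU _ UaH).1.
Qed.

Lemma chi_cfval U a H b K : gct U -> chi U -> U (a, H) -> U (b, K) ->
  forall V u, cfval H V u a = cfval K V u b.
Proof.
move=> gU [cfU _] UaH UbK V u.
exact: (proj1 (cf_allbut_depP V u gU) (cfU V I u I)).
Qed.

Lemma chi_of_approx U :
  gct U -> (forall p q, U p -> U q -> pair_approx p q) -> chi U.
Proof.
move=> gU appU; split=> V _; last by move=> p q Up Uq; rewrite (appU p q Up Uq).1.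
move=> u _; apply/cf_allbut_depP => // a H b K UaH UbK.
have [/= ab simHK] := appU _ _ UaH UbK; subst b.
exact: cfval_sim (gU _ UaH) (gU _ UbK) simHK.
Qed.

Lemma preceq_singletonP P e : is_system e.2 ->
  preceq (singleton e) P <-> exists2 p, P p & pair_approx e p.
Proof.
case: e => a H /= Hs; split.
  move=> [R [RP appR]]; have [|F [RaF simFH]] := proj1 (appR H Hs a).
    by exists H; split=> //; apply: sys_sim_refl.
  by exists (a, F); [apply: RP | split=> //; apply: sys_sim_sym].
move=> [[b K] Pp [/= ab simHK]]; subst b; exists (singleton (a, K)).
split=> [_ -> // | F _ s]; split=> -[F' [[-> ->] simF]].
  by exists K; split=> //; apply: sys_sim_trans (sys_sim_sym simHK) simF.
by exists H; split=> //; apply: sys_sim_trans simHK simF.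
Qed.

Lemma quot_card_pairteam p q n : in_S p -> in_S q -> ~ sys_sim p.2 q.2 ->
  quot_card (pairteam p q) n <-> n = 2.
Proof.
move=> pS qS npq; split=> [[r [Pr [r_inj r_onto]]] | ->].
  have [i api] := r_onto p (or_introl erefl).
  have [j aqj] := r_onto q (or_intror erefl).
  have r_ij k : k = i \/ k = j.
    by case: (Pr k) => rk; [left|right]; apply: r_inj; rewrite rk.
  have nij : i != j.
    apply/eqP=> ij; apply: npq; rewrite ij in api.
    exact: sys_sim_trans api.2 (sys_sim_sym aqj.2).
  rewrite -[n]card_ord -cardsT (_ : [set: _] = [set i; j]) ?cards2 ?nij //.
  by apply/setP=> k; rewrite !inE; case: (r_ij k) => ->; rewrite eqxx ?orbT.
exists (fun i : 'I_2 => if i == ord0 then p else q); split=> [i|].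
  by case: ifP; [left|right].
split=> [i j|e [->|->]].
- move: i j => [[|[|//]] ?] [[|[|//]] ?] /= [_ sim]; try exact: val_inj.
  by exfalso; apply: npq; apply: sys_sim_sym.
- by exists ord0; split=> //; apply: sys_sim_refl pS.1.
- by exists ord_max; split=> //; apply: sys_sim_refl qS.1.
Qed.

(* [Xi P] is [chi_k \/ Xi_tail P] with [k + 1 = |P / ~|]. *)
Definition Xi_tail P : form sg :=
  f_or (Theta (fun s => ~ team_asg P s))
       (f_bigor
          (fun p => team_asg P p.1 /\ is_system p.2 /\ ~ preceq (singleton p) P)
          (fun p => f_and (Theta (fun s => s = p.1)) (Phi p.2))).

Lemma Xi_pairteamP p q U : in_S p -> in_S q -> ~ sys_sim p.2 q.2 ->
  Xi (pairteam p q) U <-> f_or (@chi sg) (Xi_tail (pairteam p q)) U.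
Proof.
move=> pS qS npq; split=> [[k [/(quot_card_pairteam _ pS qS npq) [->] //]] | XiU].
by exists 1; split=> //; apply/quot_card_pairteam.
Qed.

Lemma Xi_tail_excludes P U e :
  gct U -> in_S e -> P e -> Xi_tail P U -> ~ U e.
Proof.
case: e => a H gU aHS Pe [U1 [U2 [DU [/ThetaP thU1 [Us [DU2 HUs]]]]]] Ue.
have gU2 : gct U2 by move=> e U2e; apply/gU/DU; right.
case: (proj1 (DU _) Ue) => [/thU1 /= | U2e]; first by apply; exists H.
have [[b K] [cond Use]] := proj1 (DU2 _) U2e; have [_ [Ks nprec]] := cond.
have [/ThetaP /(_ _ Use) /= ab PhiUs] := HUs _ cond; subst b.
have gUs : gct (Us (a, K)) by move=> e Use'; apply/gU2/DU2; exists (a, K).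
apply/nprec/preceq_singletonP => //; exists (a, H) => //; split=> //.
exact: sys_sim_of_Phi gUs Ks Use PhiUs.
Qed.

Lemma Xi_tail_intro P U :
  gct U -> (forall e p, U e -> P p -> ~ pair_approx e p) -> Xi_tail P U.
Proof.
move=> gU noapp; apply: (f_or_split (Q := fun e => ~ team_asg P e.1)).
  by apply/ThetaP=> e [].
exists (fun r e => (U e /\ ~ ~ team_asg P e.1) /\ e = r).
split=> [e | [a H] [_ [Hs _]]].
  split=> [[Ue nnPe] | [r [_ [Ue _]]] //]; exists e; split=> //.
  have eS := gU e Ue; split; first exact: NNPP.
  split=> [|/(preceq_singletonP _ eS.1) [p Pp]]; first exact: eS.1.
  exact: noapp Ue Pp.
split; first by apply/ThetaP=> e [_ ->].
apply/PhiP; first by move=> e [[/gU]].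
by move=> b K [[UbK _] E]; case: E UbK => -> -> /gU; apply: mimics_refl.
Qed.

Lemma uniform_of_Xi T : gct T ->
  (forall p q, in_S p -> in_S q -> ~ sys_sim p.2 q.2 -> Xi (pairteam p q) T) ->
  uniform T.
Proof.
move=> gT XiT [a H] [b K] TaH TbK; apply: NNPP => nHK.
have [aHS bKS] := (gT _ TaH, gT _ TbK).
have [T1 [T2 [DT [chiT1 tailT2]]]] :=
  proj1 (Xi_pairteamP T aHS bKS nHK) (XiT _ _ aHS bKS nHK).
have gT1 : gct T1 by move=> e T1e; apply/gT/DT; left.
have gT2 : gct T2 by move=> e T2e; apply/gT/DT; right.
have T1_of e : T e -> pairteam (a, H) (b, K) e -> T1 e.
  move=> Te Pe; case: (proj1 (DT e) Te) => // T2e.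
  by case: (Xi_tail_excludes gT2 (gT e Te) Pe tailT2).
apply/nHK/(sys_sim_of_cfval (a := a) (b := b) aHS.1 bKS.1)/(chi_cfval gT1 chiT1).
  by apply: T1_of => //; left.
by apply: T1_of => //; right.
Qed.

Lemma Xi_of_uniform T p q : gct T -> uniform T ->
  in_S p -> in_S q -> ~ sys_sim p.2 q.2 -> Xi (pairteam p q) T.
Proof.
move=> gT uT pS qS npq; apply/Xi_pairteamP => //.
pose near e := exists2 r, pairteam p q r & pair_approx e r.
apply: (f_or_split (Q := near)); last first.
  by apply: Xi_tail_intro => [e [/gT] | e r [_ nr] Pr er] //; apply: nr; exists r.
have same r1 r2 :
    pairteam p q r1 -> pairteam p q r2 -> sys_sim r1.2 r2.2 -> r1 = r2.
  by move=> [->|->] [->|->] // sim; exfalso; apply: npq => //; apply: sys_sim_sym.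
apply: chi_of_approx => [e [/gT] // | e1 e2 [T1 [r1 P1 [E1 S1]]]].
move=> [T2 [r2 P2 [E2 S2]]].
have S12 := uT _ _ T1 T2.
have r12 : r1 = r2.
  by apply: same P1 P2 (sys_sim_trans (sys_sim_sym S1) (sys_sim_trans S12 S2)).
by split=> //; rewrite E1 E2 r12.
Qed.

End CausalTeams.

Theorem lemma5p23 (sg : signature)
  (Hdom : 0 < #|Dom sg|) (Hran : forall V : Dom sg, 0 < #|Ran sg V|)
  (T : team sg) (HT : gct T) :
  (forall (s : assign sg) (F : sysf sg) (t : assign sg) (G : sysf sg),
     in_S (s, F) -> in_S (t, G) -> ~ sys_sim F G ->
     Xi (pairteam (s, F) (t, G)) T)
  <-> uniform T.
Proof.
split=> [XiT | uT s F t G]; last exact: Xi_of_uniform.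
by apply: uniform_of_Xi => // -[s F] [t G]; apply: XiT.
Qed.
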